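(* Let $d\ge1$, $L\ge1$. For every sequence $(x_t)\subseteq[-1,1]^d$, every $f^\star\in\mathcal{H}_L$ with $y_t=f^\star(x_t)$, and every horizon $T\ge2$, the envelope strategy satisfies $\sum_{t=1}^T|y_t-\hat y_t|^d\le 8^dL^d(1+\log T)$.
   Context: $\mathcal{H}_L$ is the set of functions $h:[-1,1]^d\to[0,1]$ with $|h(x)-h(x')|\le L\|x-x'\|_\infty$. Envelope strategy: at round $t$, with past data $(x_s,y_s)_{s<t}$, define $\underline h_t(x)=\max\{0,\max_{s<t}(y_s-L\|x-x_s\|_\infty)\}$ and $\overline h_t(x)=\min\{1,\min_{s<t}(y_s+L\|x-x_s\|_\infty)\}$ (with $\max_{\emptyset}=-\infty$, $\min_\emptyset=+\infty$), and predict $\hat y_t=\frac12(\underline h_t(x_t)+\overline h_t(x_t))$. $\log$ is the natural logarithm. *)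

From HB Require Import structures.
From mathcomp Require Import all_boot all_order all_algebra.
From mathcomp Require Import all_classical all_reals all_analysis.
Set Implicit Arguments. Unset Strict Implicit. Unset Printing Implicit Defensive.
Import Order.TTheory GRing.Theory Num.Theory.
Local Open Scope ring_scope.

Section Envelope.
Variables (R : realType) (d : nat).

Definition dist_inf (x x' : 'I_d -> R) : R :=
  \big[Num.max/0]_(i < d) `|x i - x' i|.

Definition in_cube (x : 'I_d -> R) : Prop := forall i, -1 <= x i <= 1.

Definition in_HL (L : R) (h : ('I_d -> R) -> R) : Prop :=
  (forall x, in_cube x -> 0 <= h x <= 1) /\
  (forall x x', in_cube x -> in_cube x' -> `|h x - h x'| <= L * dist_inf x x').

(* Rounds are indexed 0,1,2,...; at round t the past data are rounds s < t. *)
Definition env_low (L : R) (xs : nat -> 'I_d -> R) (ys : nat -> R) (t : nat)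
  (x : 'I_d -> R) : R :=
  \big[Num.max/0]_(s < t) (ys s - L * dist_inf x (xs s)).

Definition env_up (L : R) (xs : nat -> 'I_d -> R) (ys : nat -> R) (t : nat)
  (x : 'I_d -> R) : R :=
  \big[Num.min/1]_(s < t) (ys s + L * dist_inf x (xs s)).

Definition env_pred (L : R) (xs : nat -> 'I_d -> R) (ys : nat -> R) (t : nat) : R :=
  (env_low L xs ys t (xs t) + env_up L xs ys t (xs t)) / 2.

End Envelope.

From HB Require Import structures.
From mathcomp Require Import all_boot all_order all_algebra.
From mathcomp Require Import all_classical all_reals all_analysis.
From mathcomp Require Import ring lra.
Import Order.TTheory GRing.Theory Num.Theory.
Set Implicit Arguments. Unset Strict Implicit.
Local Open Scope ring_scope.

(* The envelopes sandwich f*, so the error at round t is at most half the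
   envelope width: at most 1/2, and at most L ||x_t - x_s|| for every earlier
   s.  Partition [-1,1]^d into 2^(kd) dyadic cells of side 2^(1-k).  If some
   earlier point shares the cell of x_t at scale k, the error is at most
   2L/2^k; charge round t to the first scale k+1 at which its cell is fresh,
   paying (2L/2^k)^d.  At most 2^((k+1)d) rounds are fresh at scale k+1, so
   each scale costs (4L)^d in total.  Using floor(log2 T) + 1 scales, the remaining
   rounds cost at most T (2L/2^(floor(log2 T) + 1))^d <= (2L)^d, so the sum is
   at most (4L)^d (floor(log2 T) + 2) <= 8^d L^d (1 + log T). *)

Lemma card_first_occurrences (A : finType) (g : nat -> A) T :
  (#|[pred t : 'I_T | [forall s : 'I_t, g s != g t]]| <= #|A|)%N.
Proof.
rewrite -(card_in_imset (f := fun t : 'I_T => g t)); first exact: max_card.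
move=> t1 t2; rewrite !inE => /forallP first1 /forallP first2 g12.
case: (ltngtP t1 t2) => [lt12|lt21|/val_inj//].
- by have := first2 (Ordinal lt12); rewrite g12 eqxx.
- by have := first1 (Ordinal lt21); rewrite g12 eqxx.
Qed.

Lemma le_sum_first_fresh (R : numDomainType) (v : R) (b : nat -> R)
    (fresh : nat -> bool) K :
  (forall k, 0 <= b k) -> (forall k, ~~ fresh k -> v <= b k) -> ~~ fresh 0 ->
  v <= \sum_(k < K) (if fresh k.+1 then b k else 0) + b K.
Proof.
move=> b_ge0 v_le_b fresh0; elim: K => [|K IH]; first by rewrite big_ord0 add0r v_le_b.
rewrite big_ord_recr /=; case: ifP => [_|/negbT not_fresh].
  by rewrite -addrA (le_trans IH) // lerD2l lerDl.
rewrite addr0 (le_trans (v_le_b _ not_fresh)) // lerDr.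
by apply: sumr_ge0 => k _; case: ifP.
Qed.

Section DyadicCells.
Variables (R : realType) (d : nat).

Lemma dyadic_index_subproof k n : (minn n (2 ^ k).-1 < 2 ^ k)%N.
Proof. by apply: leq_ltn_trans (geq_minr _ _) _; rewrite ltn_predL expn_gt0. Qed.

(* The interval [-1,1] is cut into 2^k pieces of length 2/2^k; the right end
   point 1 is put into the last piece. *)
Definition dyadic_index k (v : R) : 'I_(2 ^ k) :=
  Ordinal (dyadic_index_subproof k (Num.truncn ((v + 1) * 2 ^+ k / 2))).

Lemma dyadic_index_bounds k v : -1 <= v <= 1 ->
  (dyadic_index k v)%:R <= (v + 1) * 2 ^+ k / 2 <= (dyadic_index k v)%:R + 1.
Proof.
move=> /andP[v_ge v_le]; set a := (v + 1) * 2 ^+ k / 2.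
have pow_gt0 : (0 : R) < 2 ^+ k by apply: exprn_gt0.
have a_ge0 : 0 <= a by rewrite /a divr_ge0 // mulr_ge0 //; lra.
have a_le : a <= 2 ^+ k by rewrite /a ler_pdivrMr // mulrC ler_pM2l //; lra.
have /andP[trunc_le trunc_gt] := truncn_itv a_ge0.
rewrite /dyadic_index /=; case: leqP => [_|trunc_big] /=.
  by rewrite trunc_le natr1 ltW.
rewrite natr1 prednK ?expn_gt0 // natrX a_le andbT.
by apply: le_trans trunc_le; rewrite ler_nat ltnW.
Qed.

Lemma dyadic_index_close k u v : -1 <= u <= 1 -> -1 <= v <= 1 ->
  dyadic_index k u = dyadic_index k v -> `|u - v| <= 2 / 2 ^+ k.
Proof.
move=> /(dyadic_index_bounds k) u_bnd /(dyadic_index_bounds k) + same.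
rewrite -same; move: u_bnd => /andP[? ?] /andP[? ?].
have pow_gt0 : (0 : R) < 2 ^+ k by apply: exprn_gt0.
have -> : u - v = ((u + 1) * 2 ^+ k / 2 - (v + 1) * 2 ^+ k / 2) * (2 / 2 ^+ k).
  by field; rewrite lt0r_neq0.
have scale_ge0 : (0 : R) <= 2 / 2 ^+ k by rewrite divr_ge0 ?ltW.
rewrite normrM [`|2 / _|]ger0_norm //; apply: ler_piMl => //.
by rewrite ler_norml; apply/andP; split; lra.
Qed.

Definition dyadic_cell k (x : 'I_d -> R) : {ffun 'I_d -> 'I_(2 ^ k)} :=
  [ffun i => dyadic_index k (x i)].

Lemma dyadic_cell_close k x x' : in_cube x -> in_cube x' ->
  dyadic_cell k x = dyadic_cell k x' -> dist_inf x x' <= 2 / 2 ^+ k.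
Proof.
move=> cube_x cube_x' same; apply: bigmax_le => [|i _].
  by rewrite divr_ge0 // exprn_ge0.
apply: dyadic_index_close => //.
by have := congr1 (fun c : {ffun _ -> _} => c i) same; rewrite !ffunE.
Qed.

End DyadicCells.

Section Envelope.
Variables (R : realType) (d : nat) (L : R) (xs : nat -> 'I_d -> R)
  (f : ('I_d -> R) -> R).
Hypothesis f_HL : in_HL L f.
Hypothesis xs_cube : forall t, in_cube (xs t).
Hypothesis L_ge1 : 1 <= L.

Local Notation ys := (fun s => f (xs s)).
Local Notation lo t := (env_low L xs ys t (xs t)).
Local Notation up t := (env_up L xs ys t (xs t)).
Local Notation err t := `|f (xs t) - env_pred L xs ys t|.

Lemma env_low_le t x : in_cube x -> env_low L xs ys t x <= f x.
Proof.
move=> cx; have [/(_ x cx)/andP[f_ge0 _] f_lip] := f_HL.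
apply: bigmax_le => // s _.
by have := f_lip _ _ cx (xs_cube s); rewrite ler_norml => /andP[? _] /=; lra.
Qed.

Lemma env_up_ge t x : in_cube x -> f x <= env_up L xs ys t x.
Proof.
move=> cx; have [/(_ x cx)/andP[_ f_le1] f_lip] := f_HL.
apply: le_bigmin => // s _.
by have := f_lip _ _ cx (xs_cube s); rewrite ler_norml => /andP[_ ?] /=; lra.
Qed.

Lemma env_pred_err_le t : err t <= (up t - lo t) / 2.
Proof.
have := env_low_le t (xs_cube t); have := env_up_ge t (xs_cube t).
by rewrite /env_pred ler_norml => ? ?; apply/andP; split; lra.
Qed.

Lemma env_pred_err_le_half t : err t <= 2^-1.
Proof.
have lo_ge0 : 0 <= lo t := bigmax_ge_id _ _ _ _.
have up_le1 : up t <= 1 := bigmin_le_id _ _ _ _.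
by have := env_pred_err_le t; lra.
Qed.

Lemma env_pred_err_le_dist t (s : 'I_t) : err t <= L * dist_inf (xs t) (xs s).
Proof.
have lo_ge : ys s - L * dist_inf (xs t) (xs s) <= lo t := le_bigmax _ _ _.
have up_le : up t <= ys s + L * dist_inf (xs t) (xs s) := bigmin_le _ _ _.
by have := env_pred_err_le t; lra.
Qed.

(* Scale 0 has a single cell; it is declared never fresh, its bound 2L being
   covered by [env_pred_err_le_half]. *)
Definition fresh k t : bool :=
  (0 < k)%N && [forall s : 'I_t, dyadic_cell k (xs s) != dyadic_cell k (xs t)].

Definition scale_cost k : R := (2 * L / 2 ^+ k) ^+ d.

Lemma scale_cost_ge0 k : 0 <= scale_cost k.
Proof. by apply/exprn_ge0/divr_ge0; [have := L_ge1; lra | apply/exprn_ge0]. Qed.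

Lemma env_pred_err_le_scale k t : ~~ fresh k t -> err t <= 2 * L / 2 ^+ k.
Proof.
rewrite /fresh negb_and; case: k => [_|k /= /forallPn[s /negPn /eqP same]].
  by rewrite expr0 divr1 (le_trans (env_pred_err_le_half t)) //; have := L_ge1; lra.
apply: le_trans (env_pred_err_le_dist s) _; rewrite [2 * L]mulrC -mulrA.
apply: ler_wpM2l; first by have := L_ge1; lra.
exact: dyadic_cell_close (xs_cube t) (xs_cube s) (esym same).
Qed.

Lemma card_fresh k T : (#|[pred t : 'I_T | fresh k t]| <= (2 ^ k) ^ d)%N.
Proof.
have -> : ((2 ^ k) ^ d = #|{ffun 'I_d -> 'I_(2 ^ k)}|)%N.
  by rewrite card_ffun !card_ord.
apply: leq_trans _ (card_first_occurrences (fun t => dyadic_cell k (xs t)) T).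
by apply: subset_leq_card; apply/fintype.subsetP => t; rewrite !inE => /andP[].
Qed.

Lemma sum_err_le K T : \sum_(t < T) err t ^+ d <=
  \sum_(k < K) scale_cost k *+ (2 ^ k.+1) ^ d + scale_cost K *+ T.
Proof.
have err_le t : err t ^+ d <=
    \sum_(k < K) (if fresh k.+1 t then scale_cost k else 0) + scale_cost K.
  apply: (le_sum_first_fresh (fresh := fresh ^~ t)) => //; first exact: scale_cost_ge0.
  move=> k /env_pred_err_le_scale err_le; apply: lerXn2r => //.
  by rewrite nnegrE (le_trans _ err_le).
apply: le_trans (ler_sum _ (fun (t : 'I_T) _ => err_le t)) _.
rewrite big_split /= sumr_const card_ord lerD2r exchange_big.
apply: ler_sum => k _; rewrite -big_mkcond (sumr_const [pred t : 'I_T | fresh k.+1 t]).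
by apply: ler_wpMn2l; [exact: scale_cost_ge0 | exact: card_fresh].
Qed.

Lemma scale_cost_mul_cells k : scale_cost k *+ (2 ^ k.+1) ^ d = (4 * L) ^+ d.
Proof.
rewrite -[LHS]mulr_natr !natrX /scale_cost -exprMn exprS; congr (_ ^+ _).
by field; rewrite expf_neq0.
Qed.

Lemma scale_cost_tail K T : (0 < d)%N -> (T <= 2 ^ K)%N ->
  scale_cost K *+ T <= (2 * L) ^+ d.
Proof.
move=> d_gt0 T_le; have pow_gt0 : (0 : R) < 2 ^+ K by apply: exprn_gt0.
rewrite -[X in X <= _]mulr_natr /scale_cost expr_div_n -mulrA.
apply: ler_piMr; first by apply: exprn_ge0; have := L_ge1; lra.
rewrite mulrC ler_pdivrMr ?exprn_gt0 // mul1r.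
apply: (@le_trans _ _ (2 ^+ K)); first by rewrite -natrX ler_nat.
by apply: ler_eXnr => //; apply: exprn_ege1; lra.
Qed.

Lemma sum_err_le_trunc_log T : (0 < d)%N -> (0 < T)%N ->
  \sum_(t < T) err t ^+ d <= (4 * L) ^+ d *+ (trunc_log 2 T).+2.
Proof.
move=> d_gt0 T_gt0; set K := (trunc_log 2 T).+1.
have [_ T_lt] := andP (trunc_log_bounds (isT : (1 < 2)%N) T_gt0).
apply: le_trans (sum_err_le K T) _.
rewrite (eq_bigr _ (fun (k : 'I_K) _ => scale_cost_mul_cells k)) sumr_const card_ord.
rewrite [X in _ <= X]mulrSr lerD2l (le_trans (scale_cost_tail d_gt0 (ltnW T_lt))) //.
by apply: lerXn2r; rewrite ?nnegrE; have := L_ge1; lra.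
Qed.

End Envelope.

Lemma ln2_ge_half (R : realType) : 2^-1 <= ln (2 : R).
Proof.
have := @le_ln1Dx R (- 2^-1) ltac:(lra).
by rewrite (_ : 1 + - 2^-1 = (2 : R)^-1) ?lnV ?posrE //; [lra | field].
Qed.

Lemma trunc_log2_le_ln (R : realType) T :
  (0 < T)%N -> (trunc_log 2 T)%:R <= 2 * ln (T%:R : R).
Proof.
move=> T_gt0; set n := trunc_log 2 T.
have [pow_le _] := andP (trunc_log_bounds (isT : (1 < 2)%N) T_gt0).
have : ln (2 : R) * n%:R <= ln T%:R.
  rewrite mulr_natr -lnXn // ler_ln ?posrE ?exprn_gt0 ?ltr0n //.
  by rewrite -natrX ler_nat.
have : 0 <= n%:R * (ln (2 : R) - 2^-1) by rewrite mulr_ge0 // subr_ge0 ln2_ge_half.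
nra.
Qed.

Theorem corollaryA5 (R : realType) (d : nat) (L : R) (xs : nat -> 'I_d -> R)
  (fstar : ('I_d -> R) -> R) (T : nat) :
  (1 <= d)%N -> 1 <= L ->
  (forall t, in_cube (xs t)) ->
  in_HL L fstar ->
  (2 <= T)%N ->
  \sum_(t < T) `|fstar (xs t) - env_pred L xs (fun s => fstar (xs s)) t| ^+ d
    <= 8 ^+ d * L ^+ d * (1 + ln (T%:R : R)).
Proof.
move=> d_ge1 L_ge1 xs_cube f_HL T_ge2; have T_gt0 : (0 < T)%N by apply: ltnW.
apply: le_trans (sum_err_le_trunc_log f_HL xs_cube L_ge1 d_ge1 T_gt0) _.
have n_le := trunc_log2_le_ln R T_gt0; set n := trunc_log 2 T in n_le *.
have cost_ge0 : 0 <= (4 * L) ^+ d by apply: exprn_ge0; lra.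
have two_le : 2 <= (2 : R) ^+ d by rewrite -[X in X <= _]expr1 ler_eXn2l ?ltr1n.
have -> : 8 ^+ d * L ^+ d = 2 ^+ d * (4 * L) ^+ d :> R.
  by rewrite -!exprMn; congr (_ ^+ _); lra.
have lnT_ge0 : 0 <= ln (T%:R : R) by rewrite ln_ge0 // ler1n ltnW.
have : 0 <= (4 * L) ^+ d * (2 * ln T%:R - n%:R) by rewrite mulr_ge0 ?subr_ge0.
have : 0 <= (2 ^+ d - 2) * ((4 * L) ^+ d * (1 + ln T%:R)).
  by rewrite !mulr_ge0 ?subr_ge0 //; lra.
rewrite -mulr_natr -addn2 natrD; nra.
Qed.
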